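(* For every integer $n \ge 0$, define $\psi : \mathrm{SYT}(\theta^{(n)}) \to \mathcal{P}_n$ as follows. For $T \in \mathrm{SYT}(\theta^{(n)})$, let $\psi(T) = p_1 p_2 \cdots p_{2n+2}$, where for each $1 \le i \le 2n+2$: \[ p_i = \begin{cases} \mathsf{E}, & \text{if } i+2 \in \mathrm{arm}(T);\\ \mathsf{N}, & \text{if } i+2 \in \mathrm{leg}(T);\\ \mathsf{S}, & \text{if } i+2 \in \mathrm{heart}(T) \text{ and } 2 \in \mathrm{arm}(T);\\ \mathsf{W}, & \text{if } i+2 \in \mathrm{heart}(T) \text{ and } 2 \in \mathrm{leg}(T). \end{cases} \] Then $\psi(T)$ lies in $\mathcal{P}_n$ for every $T$, and $\psi$ is a bijection. In particular, $|\mathcal{P}_n| = |\mathrm{SYT}(\theta^{(n)})|$.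
   Context: For $n \ge 0$, $\theta^{(n)}$ denotes the integer partition $(n+2, 2, 1^n)$ of $2n+4$ (rows of lengths $n+2$, $2$, and then $n$ rows of length $1$), identified with its Young diagram in English convention (the row of length $n+2$ on top). The \emph{arm} of $\theta^{(n)}$ is its first row (all $n+2$ boxes, including the top-left corner box), the \emph{leg} is its first column (all $n+2$ boxes, including the top-left corner box), and the \emph{heart} is the unique box lying in neither the first row nor the first column (the second box of the second row). $\mathrm{SYT}(\theta^{(n)})$ is the set of standard Young tableaux of shape $\theta^{(n)}$: bijective fillings of the boxes with $1, \dots, 2n+4$ increasing left to right along rows and top to bottom down columns. For a tableau $T$, $\mathrm{arm}(T)$, $\mathrm{leg}(T)$, $\mathrm{heart}(T)$ denote the sets of entries of $T$ in the arm, leg, and heart respectively; ''$k \in \mathrm{arm}(T)$'' means the entry $k$ lies in the arm. $\mathcal{P}_n$ is the set of lattice paths in $\mathbb{Z}^2$ from $(0,0)$ to $(n,n)$ of exactly $2n+2$ steps, each step one of $\mathsf{N} = (0,1)$, $\mathsf{S} = (0,-1)$, $\mathsf{E} = (1,0)$, $\mathsf{W} = (-1,0)$, such that every vertex of the path lies in the closed first quadrant $\{(x,y) : x \ge 0, y \ge 0\}$. Such a path is identified with its word $p_1 p_2 \cdots p_{2n+2}$ of steps in the alphabet $\{\mathsf{N},\mathsf{S},\mathsf{E},\mathsf{W}\}$. *)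

From HB Require Import structures.
From mathcomp Require Import all_boot all_order all_algebra.
Unset Strict Implicit. Unset Printing Implicit Defensive.
Import GRing.Theory Num.Theory.

(* Boxes are (row, column), 0-based, English convention; rows 0..n+1,
   columns 0..n+1. *)
Definition in_theta {n : nat} (b : 'I_(n+2) * 'I_(n+2)) : bool :=
  (val b.1 == 0) || (val b.2 == 0) || ((val b.1 == 1) && (val b.2 == 1)).

Definition box (n : nat) := {b : 'I_(n+2) * 'I_(n+2) | in_theta b}.

Definition brow {n} (b : box n) : nat := val (val b).1.
Definition bcol {n} (b : box n) : nat := val (val b).2.

Definition in_arm {n} (b : box n) : bool := brow b == 0.
Definition in_leg {n} (b : box n) : bool := bcol b == 0.
Definition in_heart {n} (b : box n) : bool := (brow b == 1) && (bcol b == 1).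

Definition filling n := {ffun box n -> 'I_(2*n+5)}.

Definition is_SYT {n} (T : filling n) : bool :=
  [&& injectiveb T,
      [forall k : 'I_(2*n+5), (0 < val k) ==> [exists b, T b == k]],
      [forall b, 0 < val (T b)],
      [forall b1, forall b2,
         ((brow b1 == brow b2) && (bcol b1 < bcol b2)) ==> (val (T b1) < val (T b2))] &
      [forall b1, forall b2,
         ((bcol b1 == bcol b2) && (brow b1 < brow b2)) ==> (val (T b1) < val (T b2))]].

Definition SYT n : {set filling n} := [set T | is_SYT T].

Definition entry_in_arm {n} (T : filling n) (k : nat) : bool :=
  [exists b, (val (T b) == k) && in_arm b].
Definition entry_in_leg {n} (T : filling n) (k : nat) : bool :=
  [exists b, (val (T b) == k) && in_leg b].
Definition entry_in_heart {n} (T : filling n) (k : nat) : bool :=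
  [exists b, (val (T b) == k) && in_heart b].

Inductive step := N | S | E | W.

Definition step_to_ord (s : step) : 'I_4 :=
  match s with N => inord 0 | S => inord 1 | E => inord 2 | W => inord 3 end.
Definition ord_to_step (i : 'I_4) : step :=
  match val i with 0 => N | 1 => S | 2 => E | _ => W end.
Lemma step_to_ordK : cancel step_to_ord ord_to_step.
Proof. by case; rewrite /ord_to_step /= inordK. Qed.

HB.instance Definition _ := Equality.copy step (can_type step_to_ordK).
HB.instance Definition _ := Choice.copy step (can_type step_to_ordK).
HB.instance Definition _ := Countable.copy step (can_type step_to_ordK).
HB.instance Definition _ := Finite.copy step (can_type step_to_ordK).

Definition step_vec (s : step) : int * int :=
  match s with
  | N => (0%R, 1%R) | S => (0%R, (-1)%R) | E => (1%R, 0%R) | W => ((-1)%R, 0%R)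
  end.

Definition endpoint (w : seq step) : int * int :=
  foldl (fun p s => (p.1 + (step_vec s).1, p.2 + (step_vec s).2)%R) (0%R, 0%R) w.

Definition in_quadrant (p : int * int) : bool := ((0 <= p.1) && (0 <= p.2))%R.

Definition is_path_n {n} (w : (2*n+2).-tuple step) : bool :=
  all (fun k => in_quadrant (endpoint (take k w))) (iota 0 (2*n+3)) &&
  (endpoint w == ((n%:Z)%R, (n%:Z)%R)).

Definition Paths n : {set (2*n+2).-tuple step} := [set w | is_path_n w].

Definition psi_step {n} (T : filling n) (i : nat) : step :=
  if entry_in_arm T (i+2) then E
  else if entry_in_leg T (i+2) then N
  else if entry_in_heart T (i+2) && entry_in_arm T 2 then S
  else W.

(* p_i for i = 1..2n+2 *)
Definition psi {n} (T : filling n) : (2*n+2).-tuple step :=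
  [tuple psi_step T (val i).+1 | i < 2*n+2].

From HB Require Import structures.
From mathcomp Require Import all_boot all_order all_algebra.
From mathcomp Require Import zify.
Set Implicit Arguments. Unset Strict Implicit. Unset Printing Implicit Defensive.
Import GRing.Theory Num.Theory.

(* Entry 1 always sits in the corner and entry 2 in the arm or in the leg, so a standard
   tableau of shape theta^(n) amounts to the sets of entries of its arm and of its leg
   together with its heart entry h >= 3; beyond both sets being sorted, the only condition
   linking them is that the second entries of arm and leg are smaller than h.  The word
   psi(T) records, for each entry k >= 3, whether k lies in the arm (E), in the leg (N) or
   is the heart (S or W, according to where 2 sits).  Conversely a word determines the
   three sets: ending at (n, n) after 2n+2 steps says that there is exactly one heart
   letter and that arm and leg receive n+2 entries each, and staying in the quadrant says
   that the heart letter W (resp. S) is preceded by an E (resp. N), i.e. that the second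
   entry of the arm (resp. leg) is smaller than h. *)

Lemma prefix_count_le_index (T : eqType) (x y : T) (s : seq T) :
  count_mem x s <= 1 -> x != y ->
  (forall k, count_mem x (take k s) <= count_mem y (take k s)) <->
  (x \in s -> y \in take (index x s) s).
Proof.
move=> x_once neq_xy; split=> [le_xy x_in|y_before k].
  have := le_xy (index x s).+1.
  rewrite (take_nth x) ?index_mem // nth_index // -cats1 !count_cat /= eqxx.
  by rewrite (negbTE neq_xy) -has_pred1 has_count; lia.
have [x_in_k|/count_memPn-> //] := boolP (x \in take k s).
have x_in := mem_take x_in_k; have y_before_x := y_before x_in.
have y_in := mem_take y_before_x.
have y_in_k : y \in take k s.
  rewrite in_take // in x_in_k; rewrite in_take // in y_before_x.
  by rewrite in_take //; lia.
have : count_mem x (take k s) <= count_mem x s.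
  by rewrite -[in X in _ <= X](cat_take_drop k s) count_cat leq_addr.
by move: y_in_k; rewrite -has_pred1 has_count; lia.
Qed.

Lemma find_count1 (T : Type) (x0 : T) (p : pred T) (s : seq T) j :
  count p s <= 1 -> j < size s -> p (nth x0 s j) -> find p s = j.
Proof.
move=> p_once lt_j p_j; apply/eqP; rewrite eqn_leq.
have -> /= : find p s <= j by rewrite leqNgt; apply: contraL p_j => /(before_find x0)->.
rewrite leqNgt; apply/negP => lt_find.
have : 0 < count p (drop j s).
  rewrite -has_count; apply/(has_nthP x0).
  by exists 0; rewrite ?size_drop ?nth_drop ?addn0 ?subn_gt0.
have : 0 < count p (take j s).
  by rewrite -has_count has_take // has_find; lia.
by have := count_cat p (take j s) (drop j s); rewrite cat_take_drop; lia.
Qed.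

Lemma sorted_nth1 (s : seq nat) m : sorted ltn s -> nth 0 s 0 = 1 -> m \in s -> 1 < m ->
  (forall k, k \in s -> 1 < k -> m <= k) -> nth 0 s 1 = m.
Proof.
move=> s_sorted s0 m_in gt1_m m_min.
have lt_i : index m s < size s by rewrite index_mem.
have i_gt0 : 0 < index m s.
  by rewrite lt0n; apply: contraTneq gt1_m => i0; rewrite -(nth_index 0 m_in) i0 s0.
have size_gt1 : 1 < size s by lia.
have lt_nth := sorted_ltn_nth ltn_trans 0 s_sorted.
have nth1_gt1 : 1 < nth 0 s 1 by rewrite -[X in X < _]s0 lt_nth ?inE //; lia.
have m_le : m <= nth 0 s 1 by apply: (m_min _ _ nth1_gt1); apply: mem_nth.
apply/eqP; rewrite eqn_leq m_le andbT.
have [i1|lt_1i] := eqVneq (index m s) 1; first by rewrite -i1 nth_index.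
by rewrite -[X in _ <= X](nth_index 0 m_in) ltnW // lt_nth ?inE //; lia.
Qed.

Lemma index_le_nth (T : eqType) (x0 x : T) (s : seq T) i : nth x0 s i = x -> index x s <= i.
Proof. by move=> nth_i; rewrite leqNgt; apply/negP => /(before_find x0); rewrite nth_i /= eqxx. Qed.

Lemma step_eqE (x y : step) :
  (x == y) = match x, y with N, N | S, S | E, E | W, W => true | _, _ => false end.
Proof. by case: x; case: y; rewrite ?eqxx //; apply/eqP. Qed.

Lemma count_steps (w : seq step) :
  count_mem N w + count_mem S w + count_mem E w + count_mem W w = size w.
Proof. by elim: w => //= x w <-; case: x; rewrite !step_eqE /=; lia. Qed.

Lemma endpointE (w : seq step) : endpoint w =
  ((count_mem E w)%:Z - (count_mem W w)%:Z, (count_mem N w)%:Z - (count_mem S w)%:Z)%R.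
Proof.
suff foldE (a b : int) : foldl (fun p s => (p.1 + (step_vec s).1, p.2 + (step_vec s).2)%R)
    (a, b) w = (a + ((count_mem E w)%:Z - (count_mem W w)%:Z),
                b + ((count_mem N w)%:Z - (count_mem S w)%:Z))%R.
  by rewrite /endpoint foldE !add0r.
elim: w a b => [|x w IHw] a b /=; first by rewrite !subrr !addr0.
by rewrite IHw; case: x; congr pair; rewrite /= !step_eqE /=; lia.
Qed.

Lemma in_quadrant_endpoint (w : seq step) : in_quadrant (endpoint w) =
  (count_mem W w <= count_mem E w) && (count_mem S w <= count_mem N w).
Proof. by rewrite endpointE /in_quadrant /= !subr_ge0 !lez_nat. Qed.

Definition heart_step (x : step) := (x == S) || (x == W).

Lemma count_heart_step (w : seq step) : count heart_step w = count_mem S w + count_mem W w.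
Proof. by elim: w => //= x w ->; case: x; rewrite /heart_step !step_eqE /=; lia. Qed.

Lemma one_heart_step (w : seq step) : count heart_step w = 1 -> (W \in w) = (S \notin w).
Proof. by rewrite count_heart_step -!has_pred1 !has_count; case: ltnP; lia. Qed.

(* [label_set E S w] and [label_set N W w] are the entries of the arm and of the leg of
   the tableau with word [w]; the letter at position [i] of [w] stands for entry [i + 3]. *)
Section Labels.
Variables (X H : step) (w : seq step).

Definition in_labels k :=
  (k == 1) || ((k == 2) && (H \in w)) || ((2 < k) && (nth N w (k - 3) == X)).

Definition label_set := [seq k <- iota 1 (size w + 2) | in_labels k].

Lemma mem_label_set k : (k \in label_set) = (0 < k <= size w + 2) && in_labels k.
Proof. by rewrite mem_filter mem_iota andbC; congr andb; lia. Qed.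

Lemma label_set_sorted : sorted ltn label_set.
Proof. exact/sorted_filter/iota_ltn_sorted/ltn_trans. Qed.

Lemma nth_label_set0 : nth 0 label_set 0 = 1.
Proof. by rewrite /label_set addnC. Qed.

Lemma label_set2 : (2 \in label_set) = (H \in w).
Proof. by rewrite mem_label_set /in_labels /= leq_addl orbF. Qed.

Lemma label_setE k : 2 < k <= size w + 2 -> (k \in label_set) = (nth N w (k - 3) == X).
Proof.
move=> k_range; rewrite mem_label_set /in_labels.
have [-> -> -> ->] : [/\ 0 < k <= size w + 2, 2 < k, (k == 1) = false & (k == 2) = false].
  by split; lia.
by [].
Qed.

Lemma size_label_set : size label_set = 1 + (H \in w) + count_mem X w.
Proof.
rewrite size_filter addnC iotaD count_cat /= /in_labels /= orbF addn0 -addnA.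
congr (_ + (_ + _)).
transitivity (count (fun k => nth N w (k - 3) == X) (iota 3 (size w))).
  apply: eq_in_count => k; rewrite mem_iota => k_range.
  by have [-> -> ->] : [/\ 2 < k, (k == 1) = false & (k == 2) = false] by split; lia.
rewrite -[3]/(3 + 0) iotaDl count_map -[in RHS](mkseq_nth N w) /mkseq count_map.
by apply: eq_count => i /=; rewrite addKn.
Qed.

Lemma nth_label_set1 : (H \notin w -> X \in w) ->
  nth 0 label_set 1 = if H \in w then 2 else index X w + 3.
Proof.
move=> X_in; have [H_in|H_notin] := ifPn;
  apply: (sorted_nth1 label_set_sorted nth_label_set0) => //.
- by rewrite label_set2.
- have lt_idx : index X w < size w by rewrite index_mem X_in.
  by rewrite label_setE ?addnK ?nth_index ?X_in //; lia.
- by rewrite addn3.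
- move=> k k_in gt1_k.
  have k_gt2 : 2 < k.
    by rewrite ltn_neqAle gt1_k andbT; apply: contraNneq H_notin => k2; rewrite -label_set2 k2.
  have k_le : k <= size w + 2 by move: k_in; rewrite mem_label_set => /andP[/andP[]].
  by move: k_in; rewrite label_setE ?k_gt2 // => /eqP/index_le_nth; lia.
Qed.

End Labels.

Definition arm_set := label_set E S.
Definition leg_set := label_set N W.
Definition heart_of (w : seq step) := find heart_step w + 3.

Lemma heart_ofE w j :
  count heart_step w <= 1 -> j < size w -> heart_step (nth N w j) -> heart_of w = j + 3.
Proof. by move=> once lt_j heart_j; rewrite /heart_of (find_count1 once lt_j heart_j). Qed.

Lemma heart_of_range w : count heart_step w = 1 -> 2 < heart_of w <= size w + 2.
Proof. by move=> one; have := has_find heart_step w; rewrite has_count one /heart_of; lia. Qed.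

Lemma heart_of_step w : count heart_step w = 1 -> heart_step (nth N w (heart_of w - 3)).
Proof. by move=> one; rewrite /heart_of addnK; apply: nth_find; rewrite has_count one. Qed.

Lemma label_set1_lt_heart X H H' w :
  heart_step =1 predU (pred1 H) (pred1 H') -> H != H' ->
  count heart_step w = 1 -> (H \notin w -> X \in w) ->
  (nth 0 (label_set X H w) 1 < heart_of w) = ((H' \in w) ==> (X \in take (index H' w) w)).
Proof.
move=> heartE neq_HH' one X_in.
have H'_in : (H' \in w) = (H \notin w).
  have := count_predUI (pred1 H) (pred1 H') w.
  rewrite -(eq_count heartE) one (@eq_count _ (predI _ _) pred0) ?count_pred0; last first.
    by move=> x /=; apply/andP => -[/eqP-> /eqP]; apply/eqP.
  by rewrite -!has_pred1 !has_count; case: ltnP; lia.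
rewrite nth_label_set1 // H'_in; case: ifPn => [_|H_notin] /=.
  by have := heart_of_range one; lia.
have -> : heart_of w = index H' w + 3.
  rewrite /heart_of /index; congr (_ + 3); apply: eq_in_find => x x_in.
  rewrite heartE /=; case: eqVneq => [xH|//].
  by rewrite -xH x_in in H_notin.
by rewrite ltn_add2r in_take ?X_in.
Qed.

Section OneHeartWords.
Variable w : seq step.
Hypothesis one_heart : count heart_step w = 1.

Lemma nth_labels i : i < size w -> nth N w i =
  if i + 3 \in arm_set w then E else if i + 3 \in leg_set w then N
  else if 2 \in arm_set w then S else W.
Proof.
move=> lt_i; rewrite /arm_set /leg_set label_set2 !label_setE ?addnK; try lia.
have := mem_nth N lt_i; case: (nth N w i) => w_i; rewrite !step_eqE //= ?w_i //.
by move: w_i; rewrite one_heart_step // => /negbTE->.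
Qed.

Lemma labels_cover k : 0 < k <= size w + 2 ->
  [|| k \in arm_set w, k \in leg_set w | k == heart_of w].
Proof.
move=> k_range; rewrite /arm_set /leg_set.
have [k_gt2|k_le2] := ltnP 2 k; last first.
  have [->|->] : k = 1 \/ k = 2 by lia.
    by rewrite mem_label_set /in_labels eqxx andbT; lia.
  by rewrite !label_set2 one_heart_step //; case: (S \in w).
rewrite !label_setE; try lia.
have lt_k : k - 3 < size w by lia.
have := heart_ofE (eq_leq one_heart) lt_k; rewrite /heart_step.
by case: (nth N w (k - 3)); rewrite !step_eqE //= => /(_ isT)->; rewrite subnK ?eqxx.
Qed.

Lemma arm_leg_set_meet k : k \in arm_set w -> k \in leg_set w -> k = 1.
Proof.
rewrite /arm_set /leg_set !mem_label_set /in_labels; case: k => [|[|[|k]]] //=.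
  by rewrite one_heart_step //; case: (S \in w); rewrite !andbF.
by move=> /andP[_ /eqP->] /andP[_]; rewrite step_eqE.
Qed.

Lemma heart_of_notin_arm_set : heart_of w \notin arm_set w.
Proof.
rewrite /arm_set label_setE ?heart_of_range //.
by apply: contraL (heart_of_step one_heart) => /eqP->; rewrite /heart_step !step_eqE.
Qed.

Lemma heart_of_notin_leg_set : heart_of w \notin leg_set w.
Proof.
rewrite /leg_set label_setE ?heart_of_range //.
by apply: contraL (heart_of_step one_heart) => /eqP->; rewrite /heart_step !step_eqE.
Qed.

End OneHeartWords.

Lemma labels_inj (w1 w2 : seq step) : size w1 = size w2 ->
  count heart_step w1 = 1 -> count heart_step w2 = 1 ->
  arm_set w1 = arm_set w2 -> leg_set w1 = leg_set w2 -> w1 = w2.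
Proof.
move=> eq_size one1 one2 eqA eqL; apply: (eq_from_nth (x0 := N)) => // i lt_i.
by rewrite !nth_labels // -?eq_size // eqA eqL.
Qed.

Section PathCharacterization.
Variables (n : nat) (w : (2*n+2).-tuple step).

Lemma quadrant_prefixesP :
  all (fun k => in_quadrant (endpoint (take k w))) (iota 0 (2*n+3)) <->
  (forall k, count_mem W (take k w) <= count_mem E (take k w)) /\
  (forall k, count_mem S (take k w) <= count_mem N (take k w)).
Proof.
split=> [/allP quad|[W_E S_N]]; last first.
  by apply/allP => k _; rewrite in_quadrant_endpoint W_E S_N.
have {}quad k : (count_mem W (take k w) <= count_mem E (take k w)) &&
                (count_mem S (take k w) <= count_mem N (take k w)).
  have [lt_k|ge_k] := ltnP k (2*n+3); first by rewrite -in_quadrant_endpoint quad ?mem_iota.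
  rewrite take_oversize ?size_tuple; last lia.
  by rewrite -(take_size w) size_tuple -in_quadrant_endpoint quad ?mem_iota //; lia.
by split=> k; case/andP: (quad k).
Qed.

Lemma endpoint_diagonalP : endpoint w = (n%:Z, n%:Z)%R <->
  count_mem E w = n + count_mem W w /\ count_mem N w = n + count_mem S w.
Proof.
rewrite endpointE; split=> [[/eqP eE /eqP eN]|[-> ->]]; last by rewrite !PoszD !addrK.
by move: eE eN; rewrite !subr_eq -!PoszD !eqz_nat => /eqP-> /eqP->.
Qed.

Lemma counts_labelsP :
  count_mem E w = n + count_mem W w /\ count_mem N w = n + count_mem S w <->
  [/\ count heart_step w = 1, size (arm_set w) = n+2 & size (leg_set w) = n+2].
Proof.
have := count_steps w; rewrite size_tuple.
rewrite count_heart_step /arm_set /leg_set !size_label_set -!has_pred1 !has_count.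
by case: (ltnP 0 (count_mem S w)); case: (ltnP 0 (count_mem W w)) => /= *;
  split=> [[? ?]|[? ? ?]]; try split; lia.
Qed.

Lemma quadrant_labelsP :
  count heart_step w = 1 -> size (arm_set w) = n+2 -> size (leg_set w) = n+2 ->
  (forall k, count_mem W (take k w) <= count_mem E (take k w)) /\
  (forall k, count_mem S (take k w) <= count_mem N (take k w)) <->
  nth 0 (arm_set w) 1 < heart_of w /\ nth 0 (leg_set w) 1 < heart_of w.
Proof.
move=> one size_arm size_leg.
have [S_once W_once] : count_mem S w <= 1 /\ count_mem W w <= 1.
  by move: one; rewrite count_heart_step; lia.
have arm_lt : (nth 0 (arm_set w) 1 < heart_of w) = ((W \in w) ==> (E \in take (index W w) w)).
  apply: label_set1_lt_heart; rewrite ?step_eqE // => S_notin.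
  by move: size_arm; rewrite /arm_set size_label_set (negbTE S_notin) -has_pred1 has_count; lia.
have leg_lt : (nth 0 (leg_set w) 1 < heart_of w) = ((S \in w) ==> (N \in take (index S w) w)).
  apply: label_set1_lt_heart; rewrite ?step_eqE //.
    by move=> x; rewrite /heart_step orbC.
  move=> W_notin.
  by move: size_leg; rewrite /leg_set size_label_set (negbTE W_notin) -has_pred1 has_count; lia.
have [neq_WE neq_SN] : W != E /\ S != N by rewrite !step_eqE.
have W_E := prefix_count_le_index W_once neq_WE.
have S_N := prefix_count_le_index S_once neq_SN.
rewrite arm_lt leg_lt; split=> [[/W_E ? /S_N ?]|[/implyP ? /implyP ?]].
  by split; apply/implyP.
by split; [apply/W_E | apply/S_N].
Qed.

Lemma PathsP : w \in Paths n <->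
  [/\ count heart_step w = 1, size (arm_set w) = n+2, size (leg_set w) = n+2,
      nth 0 (arm_set w) 1 < heart_of w & nth 0 (leg_set w) 1 < heart_of w].
Proof.
rewrite inE /is_path_n; split.
  case/andP => /quadrant_prefixesP quad.
  move=> /eqP/endpoint_diagonalP/counts_labelsP[one size_arm size_leg].
  by have [] := (quadrant_labelsP one size_arm size_leg).1 quad.
case=> one size_arm size_leg arm_lt leg_lt; apply/andP; split.
  by apply/quadrant_prefixesP/(quadrant_labelsP one size_arm size_leg).
by apply/eqP/endpoint_diagonalP/counts_labelsP.
Qed.

End PathCharacterization.

Section Boxes.
Variable n : nat.

Definition cell_ord (k : nat) : 'I_(n+2) := insubd (Ordinal (ltn_addl n (isT : 0 < 2))) k.

Lemma val_cell_ord k : k < n+2 -> val (cell_ord k) = k.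
Proof. by move=> lt_k; rewrite val_insubd lt_k. Qed.

Lemma arm_in_theta c : in_theta (cell_ord 0, cell_ord c).
Proof. by rewrite /in_theta /= val_cell_ord ?eqxx //; lia. Qed.
Lemma leg_in_theta r : in_theta (cell_ord r, cell_ord 0).
Proof. by rewrite /in_theta /= (val_cell_ord (k := 0)) ?eqxx ?orbT //; lia. Qed.
Lemma heart_in_theta : in_theta (cell_ord 1, cell_ord 1).
Proof. by rewrite /in_theta /= val_cell_ord ?eqxx ?orbT //; lia. Qed.

Definition arm_box c : box n := exist in_theta _ (arm_in_theta c).
Definition leg_box r : box n := exist in_theta _ (leg_in_theta r).
Definition heart_box : box n := exist in_theta _ heart_in_theta.

Lemma box_ext (b1 b2 : box n) : brow b1 = brow b2 -> bcol b1 = bcol b2 -> b1 = b2.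
Proof.
case: b1 b2 => [[r1 c1] ?] [[r2 c2] ?]; rewrite /brow /bcol /= => er ec.
by apply: val_inj; congr pair; apply: val_inj.
Qed.

Lemma brow_arm c : brow (arm_box c) = 0.
Proof. by rewrite /brow val_cell_ord //; lia. Qed.
Lemma bcol_arm c : c < n+2 -> bcol (arm_box c) = c.
Proof. exact: val_cell_ord. Qed.
Lemma brow_leg r : r < n+2 -> brow (leg_box r) = r.
Proof. exact: val_cell_ord. Qed.
Lemma bcol_leg r : bcol (leg_box r) = 0.
Proof. by rewrite /bcol val_cell_ord //; lia. Qed.
Lemma brow_heart : brow heart_box = 1.
Proof. by rewrite /brow val_cell_ord //; lia. Qed.
Lemma bcol_heart : bcol heart_box = 1.
Proof. by rewrite /bcol val_cell_ord //; lia. Qed.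

Lemma leg_box0 : leg_box 0 = arm_box 0.
Proof. by apply: box_ext; rewrite ?brow_arm ?bcol_leg ?brow_leg ?bcol_arm //; lia. Qed.

Variant box_spec : box n -> Type :=
| ArmBox c of c < n+2 : box_spec (arm_box c)
| LegBox r of 0 < r < n+2 : box_spec (leg_box r)
| HeartBox : box_spec heart_box.

Lemma boxP (b : box n) : box_spec b.
Proof.
have [lt_r lt_c] : brow b < n+2 /\ bcol b < n+2 by split; apply: ltn_ord.
have : in_theta (val b) by case: b {lt_r lt_c}.
rewrite /in_theta -/(brow b) -/(bcol b).
have [r0 _|r_neq0] := eqVneq (brow b) 0.
  have -> : b = arm_box (bcol b) by apply: box_ext; rewrite ?brow_arm ?bcol_arm.
  by constructor.
have [c0 _|c_neq0 /= /andP[/eqP r1 /eqP c1]] := eqVneq (bcol b) 0.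
  have -> : b = leg_box (brow b) by apply: box_ext; rewrite ?bcol_leg ?brow_leg.
  by constructor; rewrite lt0n r_neq0.
have -> : b = heart_box by apply: box_ext; rewrite ?brow_heart ?bcol_heart.
by constructor.
Qed.

End Boxes.

Section Fillings.
Variables (n : nat) (T : filling n).

Definition arm_val c := val (T (arm_box n c)).
Definition leg_val r := val (T (leg_box n r)).
Definition heart_val := val (T (heart_box n)).

Definition arm_row := [seq arm_val c | c <- iota 0 (n+2)].
Definition leg_col := [seq leg_val r | r <- iota 0 (n+2)].

Lemma leg_val0 : leg_val 0 = arm_val 0.
Proof. by rewrite /leg_val leg_box0. Qed.

Lemma nth_arm_row c : c < n+2 -> nth 0 arm_row c = arm_val c.
Proof. by move=> lt_c; rewrite (nth_map 0) ?size_iota ?nth_iota. Qed.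
Lemma nth_leg_col r : r < n+2 -> nth 0 leg_col r = leg_val r.
Proof. by move=> lt_r; rewrite (nth_map 0) ?size_iota ?nth_iota. Qed.

Lemma size_arm_row : size arm_row = n+2.
Proof. by rewrite size_map size_iota. Qed.
Lemma size_leg_col : size leg_col = n+2.
Proof. by rewrite size_map size_iota. Qed.

Lemma arm_val_in c : c < n+2 -> arm_val c \in arm_row.
Proof. by move=> lt_c; apply: map_f; rewrite mem_iota. Qed.
Lemma leg_val_in r : r < n+2 -> leg_val r \in leg_col.
Proof. by move=> lt_r; apply: map_f; rewrite mem_iota. Qed.

Lemma entry_in_armE k : entry_in_arm T k = (k \in arm_row).
Proof.
apply/existsP/mapP => [[b /andP[/eqP <-]]|[c]]; last first.
  by rewrite mem_iota => lt_c ->; exists (arm_box n c); rewrite /in_arm brow_arm !eqxx.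
rewrite /in_arm; case: (boxP b) => [c lt_c|r /andP[r_gt0 lt_r]|] /=.
- by exists c; rewrite ?mem_iota.
- by rewrite brow_leg //; lia.
- by rewrite brow_heart.
Qed.

Lemma entry_in_legE k : entry_in_leg T k = (k \in leg_col).
Proof.
apply/existsP/mapP => [[b /andP[/eqP <-]]|[r]]; last first.
  by rewrite mem_iota => lt_r ->; exists (leg_box n r); rewrite /in_leg bcol_leg !eqxx.
rewrite /in_leg; case: (boxP b) => [c lt_c|r /andP[_ lt_r]|] /=.
- rewrite bcol_arm // => /eqP c0; subst c.
  by exists 0; rewrite ?leg_val0 // mem_iota.
- by exists r; rewrite ?mem_iota.
- by rewrite bcol_heart.
Qed.

Lemma entry_in_heartE k : entry_in_heart T k = (heart_val == k).
Proof.
apply/existsP/eqP => [[b /andP[/eqP <-]]|<-]; last first.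
  by exists (heart_box n); rewrite /in_heart brow_heart bcol_heart !eqxx.
rewrite /in_heart; case: (boxP b) => [c lt_c|r /andP[r_gt0 lt_r]|] //=.
- by rewrite brow_arm.
- by rewrite bcol_leg andbF.
Qed.

Definition increasing_filling :=
  [/\ sorted ltn arm_row, sorted ltn leg_col,
      arm_val 1 < heart_val & leg_val 1 < heart_val].

Lemma rows_cols_increasingP :
  [forall b1, forall b2, ((brow b1 == brow b2) && (bcol b1 < bcol b2)) ==>
                          (val (T b1) < val (T b2))] &&
  [forall b1, forall b2, ((bcol b1 == bcol b2) && (brow b1 < brow b2)) ==>
                          (val (T b1) < val (T b2))]
  <-> increasing_filling.
Proof.
have homo_map_iota (f : nat -> nat) :
    (forall i j, i < j < n+2 -> f i < f j) -> sorted ltn (map f (iota 0 (n+2))).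
  move=> f_mono; apply: (homo_sorted_in (P := fun i => i < n+2)); last exact: iota_ltn_sorted.
    by move=> i j /= lt_i lt_j lt_ij; apply: f_mono; lia.
  by apply/allP => i; rewrite mem_iota.
split=> [/andP[/forallP inc_row /forallP inc_col]|[arm_sorted leg_sorted lt_arm1 lt_leg1]].
  split; try (apply: homo_map_iota => c c' /andP[lt_cc' lt_c']).
  - by have /forallP/(_ (arm_box n c'))/implyP := inc_row (arm_box n c); apply;
      rewrite !brow_arm !bcol_arm //; lia.
  - by have /forallP/(_ (leg_box n c'))/implyP := inc_col (leg_box n c); apply;
      rewrite !bcol_leg !brow_leg //; lia.
  - by have /forallP/(_ (heart_box n))/implyP := inc_col (arm_box n 1); apply;
      rewrite brow_arm bcol_arm ?bcol_heart ?brow_heart //; lia.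
  - by have /forallP/(_ (heart_box n))/implyP := inc_row (leg_box n 1); apply;
      rewrite bcol_leg brow_leg ?bcol_heart ?brow_heart //; lia.
have arm_inc c c' : c < c' < n+2 -> arm_val c < arm_val c'.
  move=> lt_cc'; rewrite -!nth_arm_row; try lia.
  by apply: (sorted_ltn_nth ltn_trans 0 arm_sorted); rewrite ?inE ?size_arm_row; lia.
have leg_inc r r' : r < r' < n+2 -> leg_val r < leg_val r'.
  move=> lt_rr'; rewrite -!nth_leg_col; try lia.
  by apply: (sorted_ltn_nth ltn_trans 0 leg_sorted); rewrite ?inE ?size_leg_col; lia.
have leg_arm_inc r : 0 < r < n+2 -> arm_val 0 < leg_val r.
  by move=> lt_r; rewrite -leg_val0; apply: leg_inc; lia.
apply/andP; split; apply/forallP => b1; apply/forallP => b2; apply/implyP.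
all: case: (boxP b1) => [c lt_c|r lt_r|]; case: (boxP b2) => [c' lt_c'|r' lt_r'|].
all: rewrite ?brow_arm ?bcol_arm ?brow_leg ?bcol_leg ?brow_heart ?bcol_heart //; try lia.
all: rewrite -/(arm_val _) -/(leg_val _) -/heart_val.
all: try by move=> ?; (apply: arm_inc || apply: leg_inc); lia.
all: move=> /andP[/eqP eq_idx _]; subst => //.
exact: leg_arm_inc.
Qed.

End Fillings.

Lemma is_SYTP n (T : filling n) :
  is_SYT T <-> [/\ injective T, forall k, 0 < k < 2*n+5 -> exists b, val (T b) = k,
                  forall b, 0 < val (T b) & increasing_filling T].
Proof.
have incP := rows_cols_increasingP T; rewrite /is_SYT; split.
  case/and5P => /injectiveP T_inj /forallP T_onto /forallP T_pos row col.
  split=> // [k /andP[k_gt0 lt_k]|]; last by apply/incP; rewrite row col.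
  by have /implyP/(_ k_gt0)/existsP[b /eqP Tb] := T_onto (Ordinal lt_k); exists b; rewrite Tb.
case=> T_inj T_onto T_pos /incP/andP[row col]; rewrite row col !andbT.
apply/and3P; split; first exact/injectiveP.
  apply/forallP => k; apply/implyP => k_gt0; have [|b Tb] := T_onto k.
    by rewrite k_gt0 ltn_ord.
  by apply/existsP; exists b; rewrite -(inj_eq val_inj) Tb.
exact/forallP.
Qed.

Section StandardTableaux.
Variables (n : nat) (T : filling n).
Hypothesis T_SYT : T \in SYT n.

Lemma SYT_props : [/\ injective T, forall k, 0 < k < 2*n+5 -> exists b, val (T b) = k,
                     forall b, 0 < val (T b) & increasing_filling T].
Proof. by apply/is_SYTP; move: T_SYT; rewrite inE. Qed.

Lemma SYT_val_inj b1 b2 : val (T b1) = val (T b2) -> b1 = b2.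
Proof. by case: SYT_props => T_inj _ _ _ /val_inj/T_inj. Qed.

Lemma SYT_entry_range b : 0 < val (T b) < 2*n+5.
Proof. by case: SYT_props => _ _ T_pos _; rewrite T_pos ltn_ord. Qed.

Lemma arm_row_range k : k \in arm_row T -> 0 < k < 2*n+5.
Proof. by case/mapP => c _ ->; apply: SYT_entry_range. Qed.
Lemma leg_col_range k : k \in leg_col T -> 0 < k < 2*n+5.
Proof. by case/mapP => r _ ->; apply: SYT_entry_range. Qed.

Lemma SYT_entry_cover k : 0 < k < 2*n+5 ->
  [\/ k \in arm_row T, k \in leg_col T | k = heart_val T].
Proof.
case: SYT_props => _ T_onto _ _ /T_onto[b <-].
case: (boxP b) => [c lt_c|r /andP[_ lt_r]|]; last exact: Or33.
  by apply: Or31; apply: arm_val_in.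
by apply: Or32; apply: leg_val_in.
Qed.

Lemma arm_val_lt c c' : c < c' < n+2 -> arm_val T c < arm_val T c'.
Proof.
case: SYT_props => _ _ _ [arm_sorted _ _ _] lt_cc'; rewrite -!nth_arm_row; try lia.
by apply: (sorted_ltn_nth ltn_trans 0 arm_sorted); rewrite ?inE ?size_arm_row; lia.
Qed.
Lemma leg_val_lt r r' : r < r' < n+2 -> leg_val T r < leg_val T r'.
Proof.
case: SYT_props => _ _ _ [_ leg_sorted _ _] lt_rr'; rewrite -!nth_leg_col; try lia.
by apply: (sorted_ltn_nth ltn_trans 0 leg_sorted); rewrite ?inE ?size_leg_col; lia.
Qed.

Lemma arm_val0 : arm_val T 0 = 1.
Proof.
have [b Tb] : exists b, val (T b) = 1 by case: SYT_props => _ T_onto _ _; apply: T_onto; lia.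
have arm0_gt0 := SYT_entry_range (arm_box n 0).
case: SYT_props => _ _ _ [_ _ lt_arm1 _].
case: (boxP b) Tb => [[|c] lt_c|r lt_r|] Tb //.
- by have := arm_val_lt (c := 0) (c' := c.+1); rewrite /arm_val Tb in arm0_gt0 *; lia.
- by have := leg_val_lt (r := 0) (r' := r); rewrite leg_val0 /leg_val Tb /arm_val; lia.
- by have := arm_val_lt (c := 0) (c' := 1); rewrite /heart_val Tb /arm_val in lt_arm1 *; lia.
Qed.

Lemma heart_val_ge3 : 3 <= heart_val T.
Proof.
case: SYT_props => _ _ _ [_ _ lt_arm1 _].
by have := arm_val_lt (c := 0) (c' := 1); rewrite arm_val0; lia.
Qed.

Lemma arm_leg_meet k : k \in arm_row T -> k \in leg_col T -> k = 1.
Proof.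
case/mapP => c; rewrite mem_iota => lt_c -> /mapP[r]; rewrite mem_iota => lt_r.
move=> /SYT_val_inj eq_box; have := congr1 brow eq_box.
rewrite brow_arm brow_leg // => r0; move: eq_box; rewrite -r0 leg_box0 => eq_box.
have := congr1 bcol eq_box; rewrite bcol_arm // bcol_arm; last lia.
by move=> ->; apply: arm_val0.
Qed.

Lemma heart_notin_arm : heart_val T \notin arm_row T.
Proof. by apply/mapP => -[c _ /SYT_val_inj/(congr1 brow)]; rewrite brow_heart brow_arm. Qed.
Lemma heart_notin_leg : heart_val T \notin leg_col T.
Proof. by apply/mapP => -[r _ /SYT_val_inj/(congr1 bcol)]; rewrite bcol_heart bcol_leg. Qed.

Lemma two_in_leg : (2 \in leg_col T) = (2 \notin arm_row T).
Proof.
have [A2|L2|h2] := @SYT_entry_cover 2 ltac:(lia).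
- by rewrite A2; apply/negP => /(arm_leg_meet A2).
- by rewrite L2; apply/esym/negP => /arm_leg_meet/(_ L2).
- by have := heart_val_ge3; rewrite -h2.
Qed.

Lemma nth_psi_entry k : 2 < k < 2*n+5 -> nth N (psi T) (k - 3) =
  if k \in arm_row T then E else if k \in leg_col T then N
  else if 2 \in arm_row T then S else W.
Proof.
move=> k_range; have lt_k : k - 3 < 2*n+2 by lia.
rewrite (_ : nth N (psi T) (k - 3) = psi_step T (k - 3).+1); last first.
  exact: (nth_mktuple _ N (Ordinal lt_k)).
rewrite /psi_step (_ : (k - 3).+1 + 2 = k); last lia.
rewrite entry_in_armE entry_in_legE entry_in_heartE entry_in_armE.
case: ifP => // notA; case: ifP => // notL.
by have [||->] := @SYT_entry_cover k ltac:(lia); rewrite ?notA ?notL ?eqxx.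
Qed.

End StandardTableaux.

Section PsiOfTableau.
Variables (n : nat) (T : filling n).
Hypothesis T_SYT : T \in SYT n.

Lemma heart_val_range : 2 < heart_val T < 2*n+5.
Proof.
have := heart_val_ge3 T_SYT; have := SYT_entry_range T_SYT (heart_box n).
by rewrite /heart_val; lia.
Qed.

Lemma nth_psi_heart : nth N (psi T) (heart_val T - 3) = if 2 \in arm_row T then S else W.
Proof.
rewrite (nth_psi_entry T_SYT); last exact: heart_val_range.
by rewrite (negbTE (heart_notin_arm T_SYT)) (negbTE (heart_notin_leg T_SYT)).
Qed.

Lemma heart_step_psi k : 2 < k < 2*n+5 ->
  heart_step (nth N (psi T) (k - 3)) = (k == heart_val T).
Proof.
move=> k_range; rewrite nth_psi_entry // /heart_step.
have [A_k|A'_k] := ifPn.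
  rewrite !step_eqE; apply/esym/eqP => k_h.
  by rewrite k_h (negbTE (heart_notin_arm T_SYT)) in A_k.
have [L_k|L'_k] := ifPn.
  rewrite !step_eqE; apply/esym/eqP => k_h.
  by rewrite k_h (negbTE (heart_notin_leg T_SYT)) in L_k.
have [||->] := @SYT_entry_cover _ _ T_SYT k ltac:(lia); rewrite ?(negPf A'_k) ?(negPf L'_k) //.
by case: ifP; rewrite !step_eqE eqxx.
Qed.

Lemma count_heart_psi : count heart_step (psi T) = 1.
Proof.
have h_range := heart_val_range.
rewrite -(mkseq_nth N (psi T)) /mkseq count_map size_tuple.
rewrite (eq_in_count (a2 := pred1 (heart_val T - 3))); last first.
  by move=> i; rewrite mem_iota /= => lt_i; rewrite -[i](addnK 3) heart_step_psi; lia.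
by rewrite count_uniq_mem ?iota_uniq // mem_iota; lia.
Qed.

Lemma heart_of_psi : heart_of (psi T) = heart_val T.
Proof.
have h_range := heart_val_range.
rewrite (heart_ofE (j := heart_val T - 3)) ?count_heart_psi ?size_tuple //; try lia.
by rewrite heart_step_psi ?eqxx //; lia.
Qed.

Lemma heart_letter_psi x : x \in psi T -> heart_step x -> x = nth N (psi T) (heart_val T - 3).
Proof.
move=> x_in heart_x; rewrite -heart_of_psi.
have lt_i : index x (psi T) < size (psi T) by rewrite index_mem.
by rewrite (heart_ofE (j := index x (psi T))) ?count_heart_psi ?addnK ?nth_index.
Qed.

Lemma mem_psi_S : (S \in psi T) = (2 \in arm_row T).
Proof.
apply/idP/idP => [S_in|A2].
  have := heart_letter_psi S_in; rewrite /heart_step eqxx nth_psi_heart => /(_ isT).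
  by case: ifP => // _ /eqP; rewrite step_eqE.
have <- : nth N (psi T) (heart_val T - 3) = S by rewrite nth_psi_heart A2.
by rewrite mem_nth // size_tuple; have := heart_val_range; lia.
Qed.

Lemma mem_psi_W : (W \in psi T) = (2 \in leg_col T).
Proof.
rewrite two_in_leg //; apply/idP/idP => [W_in|A'2].
  have := heart_letter_psi W_in; rewrite /heart_step eqxx orbT nth_psi_heart => /(_ isT).
  by case: ifP => // _ /eqP; rewrite step_eqE.
have <- : nth N (psi T) (heart_val T - 3) = W by rewrite nth_psi_heart (negbTE A'2).
by rewrite mem_nth // size_tuple; have := heart_val_range; lia.
Qed.

Lemma arm_set_psi : arm_set (psi T) = arm_row T.
Proof.
apply: (irr_sorted_eq ltn_trans ltnn) => [||k]; first exact: label_set_sorted.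
  by case: (SYT_props T_SYT) => _ _ _ [].
have [k_range|k_out] := boolP (0 < k < 2*n+5); last first.
  rewrite mem_label_set size_tuple (_ : (0 < k <= _) = false); last lia.
  by apply/esym/negP => /(arm_row_range T_SYT); apply/negP.
have [->|k_neq1] := eqVneq k 1.
  have A1 : 1 \in arm_row T by rewrite -(arm_val0 T_SYT); apply: arm_val_in; lia.
  by rewrite A1 mem_label_set /in_labels eqxx !orTb andbT; lia.
have [->|k_neq2] := eqVneq k 2; first by rewrite label_set2 mem_psi_S.
rewrite label_setE ?size_tuple; last lia.
rewrite nth_psi_entry //; last lia.
by case: ifP => _; [|case: ifP => _; [|case: ifP => _]]; rewrite step_eqE.
Qed.

Lemma leg_set_psi : leg_set (psi T) = leg_col T.
Proof.
apply: (irr_sorted_eq ltn_trans ltnn) => [||k]; first exact: label_set_sorted.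
  by case: (SYT_props T_SYT) => _ _ _ [].
have [k_range|k_out] := boolP (0 < k < 2*n+5); last first.
  rewrite mem_label_set size_tuple (_ : (0 < k <= _) = false); last lia.
  by apply/esym/negP => /(leg_col_range T_SYT); apply/negP.
have [->|k_neq1] := eqVneq k 1.
  have L1 : 1 \in leg_col T by rewrite -(arm_val0 T_SYT) -leg_val0; apply: leg_val_in; lia.
  by rewrite L1 mem_label_set /in_labels eqxx !orTb andbT; lia.
have [->|k_neq2] := eqVneq k 2; first by rewrite label_set2 mem_psi_W.
rewrite label_setE ?size_tuple; last lia.
rewrite nth_psi_entry //; last lia.
case: ifP => [A_k|_]; last by case: ifP => _; [|case: ifP => _]; rewrite step_eqE.
rewrite step_eqE; apply/esym/negP => /(arm_leg_meet T_SYT A_k); exact/eqP.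
Qed.

Lemma psi_path : psi T \in Paths n.
Proof.
case: (SYT_props T_SYT) => _ _ _ [_ _ lt_arm1 lt_leg1].
apply/PathsP; rewrite arm_set_psi leg_set_psi heart_of_psi count_heart_psi.
by rewrite size_arm_row size_leg_col nth_arm_row ?nth_leg_col; try lia.
Qed.

End PsiOfTableau.

Section FillingOfRows.
Variables (n : nat) (A L : seq nat) (h : nat).

(* Out-of-range values are truncated to 0; below, all values lie in 1..2n+4. *)
Definition filling_of : filling n :=
  [ffun b => insubd (Ordinal (ltn_addl (2*n) (isT : 0 < 5)))
     (if in_arm b then nth 0 A (bcol b) else if in_leg b then nth 0 L (brow b) else h)].

Hypotheses (size_A : size A = n+2) (size_L : size L = n+2).
Hypotheses (A0 : nth 0 A 0 = 1) (L0 : nth 0 L 0 = 1).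
Hypothesis entries_range : forall k, [|| k \in A, k \in L | k == h] -> 0 < k < 2*n+5.

Lemma val_insubd_entry k : [|| k \in A, k \in L | k == h] ->
  val (insubd (Ordinal (ltn_addl (2*n) (isT : 0 < 5))) k) = k.
Proof. by move=> /entries_range k_range; rewrite val_insubd; case/andP: k_range => _ ->. Qed.

Lemma filling_of_arm c : c < n+2 -> val (filling_of (arm_box n c)) = nth 0 A c.
Proof.
move=> lt_c; rewrite ffunE /in_arm brow_arm eqxx bcol_arm // val_insubd_entry //.
by rewrite mem_nth ?size_A.
Qed.

Lemma filling_of_leg r : r < n+2 -> val (filling_of (leg_box n r)) = nth 0 L r.
Proof.
case: r => [|r] lt_r; first by rewrite leg_box0 filling_of_arm ?A0 ?L0 //; lia.
rewrite ffunE /in_arm /in_leg brow_leg // bcol_leg /= val_insubd_entry //.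
by rewrite mem_nth ?size_L ?orbT.
Qed.

Lemma filling_of_heart : val (filling_of (heart_box n)) = h.
Proof.
by rewrite ffunE /in_arm /in_leg brow_heart bcol_heart /= val_insubd_entry // eqxx !orbT.
Qed.

Lemma arm_row_filling_of : arm_row filling_of = A.
Proof.
apply: (eq_from_nth (x0 := 0)); rewrite size_arm_row ?size_A // => c lt_c.
by rewrite nth_arm_row // /arm_val filling_of_arm.
Qed.

Lemma leg_col_filling_of : leg_col filling_of = L.
Proof.
apply: (eq_from_nth (x0 := 0)); rewrite size_leg_col ?size_L // => r lt_r.
by rewrite nth_leg_col // /leg_val filling_of_leg.
Qed.

Hypotheses (A_sorted : sorted ltn A) (L_sorted : sorted ltn L).
Hypothesis entries_cover : forall k, 0 < k < 2*n+5 -> [|| k \in A, k \in L | k == h].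
Hypothesis A_L_meet : forall k, k \in A -> k \in L -> k = 1.
Hypotheses (h_notin_A : h \notin A) (h_notin_L : h \notin L).
Hypotheses (A1_lt_h : nth 0 A 1 < h) (L1_lt_h : nth 0 L 1 < h).

Lemma filling_of_injective : injective filling_of.
Proof.
have nth_A_inj : {in gtn (n+2) &, injective (nth 0 A)}.
  move=> c c' lt_c lt_c' /eqP; rewrite nth_uniq ?size_A //; first by move/eqP.
  exact: sorted_uniq ltn_trans ltnn _ A_sorted.
have nth_L_inj : {in gtn (n+2) &, injective (nth 0 L)}.
  move=> r r' lt_r lt_r' /eqP; rewrite nth_uniq ?size_L //; first by move/eqP.
  exact: sorted_uniq ltn_trans ltnn _ L_sorted.
have arm_neq_leg c r : c < n+2 -> 0 < r < n+2 -> nth 0 A c != nth 0 L r.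
  move=> lt_c r_range; apply/eqP => eq_AL.
  have /A_L_meet : nth 0 A c \in A by rewrite mem_nth ?size_A.
  rewrite eq_AL mem_nth ?size_L; last lia.
  by move=> /(_ isT); rewrite -L0 => /nth_L_inj; rewrite !inE; lia.
have arm_neq_heart c : c < n+2 -> nth 0 A c != h.
  by move=> lt_c; apply: contraNneq h_notin_A => <-; rewrite mem_nth ?size_A.
have leg_neq_heart r : r < n+2 -> nth 0 L r != h.
  by move=> lt_r; apply: contraNneq h_notin_L => <-; rewrite mem_nth ?size_L.
move=> b1 b2 /(congr1 val).
case: (boxP b1) => [c lt_c|r r_range|]; case: (boxP b2) => [c' lt_c'|r' r'_range|] //.
all: rewrite ?filling_of_arm ?filling_of_leg ?filling_of_heart //; try lia.
- by move=> /nth_A_inj ->.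
- by move/eqP; rewrite (negbTE (arm_neq_leg _ _ lt_c r'_range)).
- by move/eqP; rewrite (negbTE (arm_neq_heart _ lt_c)).
- by move/esym/eqP; rewrite (negbTE (arm_neq_leg _ _ lt_c' r_range)).
- by move=> /nth_L_inj ->; rewrite ?inE //; lia.
- by move/eqP; rewrite (negbTE (leg_neq_heart r _)) //; lia.
- by move/esym/eqP; rewrite (negbTE (arm_neq_heart _ lt_c')).
- by move/esym/eqP; rewrite (negbTE (leg_neq_heart r' _)) //; lia.
Qed.

Lemma filling_of_SYT : filling_of \in SYT n.
Proof.
rewrite inE; apply/is_SYTP; split; first exact: filling_of_injective.
- move=> k /entries_cover/or3P[k_in|k_in|/eqP->].
  + have lt_i : index k A < n+2 by rewrite -size_A index_mem.
    by exists (arm_box n (index k A)); rewrite filling_of_arm ?nth_index.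
  + have lt_i : index k L < n+2 by rewrite -size_L index_mem.
    by exists (leg_box n (index k L)); rewrite filling_of_leg ?nth_index.
  + by exists (heart_box n); rewrite filling_of_heart.
- have entry_pos k : [|| k \in A, k \in L | k == h] -> 0 < k by move/entries_range/andP=> [].
  move=> b; case: (boxP b) => [c lt_c|r /andP[_ lt_r]|].
  + by rewrite filling_of_arm // entry_pos // mem_nth ?size_A.
  + by rewrite filling_of_leg // entry_pos // mem_nth ?size_L ?orbT.
  + by rewrite filling_of_heart entry_pos // eqxx !orbT.
split; rewrite ?arm_row_filling_of ?leg_col_filling_of //.
  by rewrite /arm_val /heart_val filling_of_arm ?filling_of_heart //; lia.
by rewrite /leg_val /heart_val filling_of_leg ?filling_of_heart //; lia.
Qed.

End FillingOfRows.

Lemma filling_of_rows n (T : filling n) : filling_of n (arm_row T) (leg_col T) (heart_val T) = T.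
Proof.
apply/ffunP => b; apply: val_inj; rewrite ffunE val_insubd.
case: (boxP b) => [c lt_c|r /andP[r_gt0 lt_r]|]; rewrite /in_arm /in_leg.
- by rewrite brow_arm bcol_arm //= nth_arm_row // ltn_ord.
- by rewrite brow_leg // bcol_leg (_ : (r == 0) = false) /= ?nth_leg_col ?ltn_ord //; lia.
- by rewrite brow_heart bcol_heart /= ltn_ord.
Qed.

Definition tableau_of_path n (w : seq step) : filling n :=
  filling_of n (arm_set w) (leg_set w) (heart_of w).

Section PathToTableau.
Variables (n : nat) (w : (2*n+2).-tuple step).
Hypothesis w_path : w \in Paths n.

Let path_props := (PathsP w).1 w_path.

Lemma path_entries_range k :
  [|| k \in arm_set w, k \in leg_set w | k == heart_of w] -> 0 < k < 2*n+5.
Proof.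
have [one _ _ _ _] := path_props; have := heart_of_range one; rewrite size_tuple => h_range.
case/or3P=> [|| /eqP->]; rewrite ?mem_label_set ?size_tuple; try lia.
all: by case/andP=> ? _; lia.
Qed.

Lemma tableau_of_path_SYT : tableau_of_path n w \in SYT n.
Proof.
have [one size_arm size_leg arm1_lt leg1_lt] := path_props.
apply: filling_of_SYT; rewrite ?nth_label_set0 ?label_set_sorted //.
- exact: path_entries_range.
- by move=> k k_range; apply: labels_cover; rewrite // size_tuple; lia.
- exact: arm_leg_set_meet.
- exact: heart_of_notin_arm_set.
- exact: heart_of_notin_leg_set.
Qed.

Lemma psi_tableau_of_path : psi (tableau_of_path n w) = w.
Proof.
have [one size_arm size_leg _ _] := path_props; have T_SYT := tableau_of_path_SYT.
apply: val_inj; apply: labels_inj; rewrite ?size_tuple ?count_heart_psi //.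
  by rewrite arm_set_psi // arm_row_filling_of //; apply: path_entries_range.
by rewrite leg_set_psi // leg_col_filling_of ?nth_label_set0 //; apply: path_entries_range.
Qed.

End PathToTableau.

Lemma tableau_of_psi n (T : filling n) : T \in SYT n -> tableau_of_path n (psi T) = T.
Proof.
move=> T_SYT; rewrite /tableau_of_path arm_set_psi // leg_set_psi // heart_of_psi //.
exact: filling_of_rows.
Qed.

Theorem theorem3p1 (n : nat) :
  [/\ (forall T, T \in SYT n -> psi T \in Paths n),
      {in SYT n &, injective (@psi n)},
      (forall w, w \in Paths n -> exists2 T, T \in SYT n & psi T = w) &
      #|Paths n| = #|SYT n| ].
Proof.
have psi_inj : {in SYT n &, injective (@psi n)}.
  by move=> T1 T2 T1_SYT T2_SYT eq_psi; rewrite -(tableau_of_psi T1_SYT) eq_psi tableau_of_psi.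
have psi_onto w : w \in Paths n -> exists2 T, T \in SYT n & psi T = w.
  move=> w_path; exists (tableau_of_path n w); first exact: tableau_of_path_SYT.
  exact: psi_tableau_of_path.
split=> //; first exact: psi_path.
rewrite -(card_in_imset psi_inj); apply: eq_card => w.
by apply/idP/imsetP => [/psi_onto[T T_SYT <-]|[T T_SYT ->]]; [exists T | exact: psi_path].
Qed.
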